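(* Let $p$ be a prime and $G$ a residually $p$-finite group. Then every cyclic subgroup of $G$ is topologically $p$-embedded in $G$.
   Context: A group is $p$-finite if its order is a finite power of $p$; a group $G$ is residually $p$-finite if for every $g\ne 1$ in $G$ there is a $p$-finite quotient of $G$ in which the image of $g$ is nontrivial. A subgroup $H$ of $G$ is topologically $p$-embedded in $G$ if the subspace topology on $H$ induced by the pro-$p$ topology on $G$ equals the pro-$p$ topology of $H$; equivalently, for every normal subgroup $N$ of $H$ of $p$-power index there is a normal subgroup $M$ of $G$ of $p$-power index with $M\cap H\le N$. *)

From mathcomp Require Import all_boot all_fingroup all_solvable.
From mathcomp Require Import pgroup.
Set Implicit Arguments. Unset Strict Implicit. Unset Printing Implicit Defensive.

Record abs_group := AbsGroup {
  carrier :> Type;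
  gmul : carrier -> carrier -> carrier;
  gone : carrier;
  ginv : carrier -> carrier;
  gmulA : forall x y z, gmul x (gmul y z) = gmul (gmul x y) z;
  gmul1 : forall x, gmul gone x = x;
  gmulV : forall x, gmul (ginv x) x = gone
}.

Section Defs.
Variable G : abs_group.

Fixpoint gpow (x : G) (n : nat) : G :=
  match n with 0 => gone G | S m => gmul x (gpow x m) end.

Definition cyclic_sub (x : G) : G -> Prop :=
  fun y => exists n : nat, y = gpow x n \/ y = gpow (ginv x) n.

Definition is_subgroup (H : G -> Prop) : Prop :=
  [/\ H (gone G), (forall x y, H x -> H y -> H (gmul x y))
    & (forall x, H x -> H (ginv x))].

Definition normal_in (N H : G -> Prop) : Prop :=
  [/\ is_subgroup N, (forall y, N y -> H y)
    & (forall h y, H h -> N y -> N (gmul (ginv h) (gmul y h)))].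

Definition index_in (N H : G -> Prop) (n : nat) : Prop :=
  exists r : 'I_n -> G, (forall i, H (r i)) /\
    forall h, H h -> exists! i, N (gmul (ginv (r i)) h).

Definition normal_ppow_index (p : nat) (N H : G -> Prop) : Prop :=
  normal_in N H /\ exists k : nat, index_in N H (p ^ k).

Definition residually_p_finite (p : nat) : Prop :=
  forall g : G, g <> gone G ->
    exists (gT : finGroupType) (f : G -> gT),
      [/\ (forall x y, f (gmul x y) = (f x * f y)%g),
          (forall z : gT, exists x, f x = z),
          pgroup p [set: gT]
        & f g <> 1%g].

(* H is topologically p-embedded in G (equivalent formulation from the paper) *)
Definition top_p_embedded (p : nat) (H : G -> Prop) : Prop :=
  forall N, normal_ppow_index p N H ->
    exists M, normal_ppow_index p M (fun _ => True) /\
      (forall y, M y -> H y -> N y).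
End Defs.

(** A subgroup [N] of index [n] in [<x>] contains exactly the powers [x^m] with
    [n %| m]: by pigeonhole some [x^d] with [0 < d <= n] lies in [N], and then
    [x^0, ..., x^(d-1)] already represent all cosets, forcing [d = n].
    For [n = p^k] with [k > 0] the element [x^(p^(k-1))] is thus outside [N], so
    residual [p]-finiteness yields a morphism [f] onto a finite [p]-group with
    [f x ^+ p^(k-1) != 1]. Its kernel [M] has [p]-power index, and [f x] has
    order [p^a] with [a >= k]; hence any power of [x] lying in [M] has exponent
    divisible by [p^k], and so lies in [N]. For [k = 0] take [M = G]. *)
From mathcomp Require Import all_boot all_fingroup all_solvable.
From mathcomp Require Import pgroup.
Set Implicit Arguments. Unset Strict Implicit. Unset Printing Implicit Defensive.

Section GroupLaws.
Variable G : abs_group.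
Local Notation "a ** b" := (gmul a b) (at level 40, left associativity).
Local Notation e := (gone G).
Local Notation inv := (@ginv G).

Lemma gmulgV (a : G) : a ** inv a = e.
Proof. by rewrite -[a ** inv a]gmul1 -(gmulV (inv a)) -gmulA (gmulA (inv a)) gmulV gmul1. Qed.

Lemma gmulg1 (a : G) : a ** e = a.
Proof. by rewrite -(gmulV a) gmulA gmulgV gmul1. Qed.

Lemma gmulKg (a b : G) : inv a ** (a ** b) = b.
Proof. by rewrite gmulA gmulV gmul1. Qed.

Lemma gmulKVg (a b : G) : a ** (inv a ** b) = b.
Proof. by rewrite gmulA gmulgV gmul1. Qed.

Lemma ginv_unique (a b : G) : a ** b = e -> inv a = b.
Proof. by move=> ab1; rewrite -(gmulKg a b) ab1 gmulg1. Qed.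

Lemma ginvK (a : G) : inv (inv a) = a.
Proof. exact/ginv_unique/gmulV. Qed.

Lemma ginvM (a b : G) : inv (a ** b) = inv b ** inv a.
Proof. by apply: ginv_unique; rewrite -gmulA (gmulA b) gmulgV gmul1 gmulgV. Qed.

Lemma gpowD (x : G) m n : gpow x (m + n) = gpow x m ** gpow x n.
Proof. by elim: m => [|m IH] /=; rewrite ?gmul1 // IH gmulA. Qed.

Lemma gpowM (x : G) m n : gpow x (m * n) = gpow (gpow x m) n.
Proof. by elim: n => [|n IH]; rewrite ?muln0 // mulnS gpowD IH. Qed.

Lemma gpowSr (x : G) n : gpow x n.+1 = gpow x n ** x.
Proof. by rewrite -addn1 gpowD /= gmulg1. Qed.

Lemma gpowV (x : G) n : gpow (inv x) n = inv (gpow x n).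
Proof.
elim: n => [|n IH] /=; first by apply/esym/ginv_unique; rewrite gmul1.
by rewrite IH -[x ** _]/(gpow x n.+1) gpowSr ginvM.
Qed.

Lemma gpowB (x : G) i j : i <= j -> inv (gpow x i) ** gpow x j = gpow x (j - i).
Proof. by move=> le_ij; rewrite -{1}(subnKC le_ij) gpowD gmulKg. Qed.

End GroupLaws.

Section SubgroupIndex.
Variables (G : abs_group) (N H : G -> Prop).
Local Notation "a ** b" := (gmul a b) (at level 40, left associativity).
Local Notation inv := (@ginv G).
Hypothesis sN : is_subgroup N.

Lemma subgroup_gpow y k : N y -> N (gpow y k).
Proof. by case: sN => N1 NM _ Ny; elim: k => [|k IH] //=; apply: NM. Qed.

Lemma subgroup_cosetC a b : N (inv a ** b) -> N (inv b ** a).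
Proof. by case: sN => _ _ NV /NV; rewrite ginvM ginvK. Qed.

Lemma subgroup_coset_trans a b c : N (inv a ** b) -> N (inv a ** c) -> N (inv b ** c).
Proof. by case: sN => _ NM _ /subgroup_cosetC Nba /(NM _ _ Nba); rewrite -gmulA gmulKVg. Qed.

Variable n : nat.
Hypothesis iN : index_in N H n.

Lemma index_in_pigeonhole (f : 'I_n.+1 -> G) : (forall j, H (f j)) ->
  exists i j, i != j /\ N (inv (f i) ** f j).
Proof.
case: iN => r [_ rU] Hf.
have [g gP] : exists g : 'I_n.+1 -> 'I_n, forall j, N (inv (r (g j)) ** f j).
  apply: (@fin_all_exists _ (fun=> 'I_n) (fun j i => N (inv (r i) ** f j))) => j.
  by have [i [Ni _]] := rU _ (Hf j); exists i.
have /injectivePn[i [j neq_ij eq_g]] : ~~ injectiveb g.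
  by apply/injectiveP => /leq_card; rewrite !card_ord ltnn.
by exists i, j; split; last by apply: (subgroup_coset_trans (gP i)); rewrite eq_g.
Qed.

Lemma index_in_leq m (f : 'I_m -> G) :
  (forall h, H h -> exists j, N (inv (f j) ** h)) -> n <= m.
Proof.
case: iN => r [rH rU] f_cover.
have [g gP] : exists g : 'I_n -> 'I_m, forall i, N (inv (f (g i)) ** r i).
  exact: (@fin_all_exists _ (fun=> 'I_m) (fun i j => N (inv (f j) ** r i))
           (fun i => f_cover _ (rH i))).
rewrite -[n]card_ord -[m]card_ord; apply: (leq_card g) => i1 i2 eq_g.
have N11 : N (inv (r i2) ** r i2) by rewrite gmulV; case: sN.
have N12 : N (inv (r i1) ** r i2).
  by apply: (subgroup_coset_trans (gP i1)); rewrite eq_g.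
by have [i [_ uniq_i]] := rU _ (rH i2); rewrite -(uniq_i _ N11) (uniq_i _ N12).
Qed.

End SubgroupIndex.

Section CyclicSubgroupIndex.
Variables (G : abs_group) (x : G) (N : G -> Prop) (n : nat).
Local Notation "a ** b" := (gmul a b) (at level 40, left associativity).
Local Notation inv := (@ginv G).
Hypotheses (sN : is_subgroup N) (iN : index_in N (cyclic_sub x) n).

Lemma cyclic_sub_gpow j : cyclic_sub x (gpow x j).
Proof. by exists j; left. Qed.

Lemma gpow_mem_dvdn d m : N (gpow x d) -> d %| m -> N (gpow x m).
Proof. by move=> Nd /dvdnP[q ->]; rewrite mulnC gpowM; apply: subgroup_gpow. Qed.

Lemma gpow_coset_modn d a b : N (gpow x d) -> a = b %[mod d] ->
  N (inv (gpow x a) ** gpow x b).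
Proof.
move=> Nd; wlog le_ab : a b / a <= b => [hyp eq_ab|/eqP].
  have [/hyp/(_ eq_ab) //|/ltnW/hyp hyp'] := leqP a b.
  exact: (subgroup_cosetC sN (hyp' (esym eq_ab))).
by rewrite eq_sym eqn_mod_dvd // gpowB //; apply: gpow_mem_dvdn.
Qed.

Lemma index_leq_gpow_mem d : 0 < d -> N (gpow x d) -> n <= d.
Proof.
move=> d_gt0 Nd; apply: (index_in_leq sN iN (f := fun j : 'I_d => gpow x j)).
move=> _ [m [->|->]].
  by exists (Ordinal (ltn_pmod m d_gt0)); apply: (gpow_coset_modn Nd); rewrite modn_mod.
have dvd_d : d %| m + (d - m %% d) %% d.
  by rewrite /dvdn modnDmr -modnDml subnKC ?modnn // ltnW ?ltn_pmod.
exists (Ordinal (ltn_pmod (d - m %% d) d_gt0)); rewrite gpowV -ginvM -gpowD /=.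
by case: sN => _ _ NV; apply/NV/(gpow_mem_dvdn Nd).
Qed.

Lemma exists_gpow_mem_leq_index : exists d, [/\ 0 < d, d <= n & N (gpow x d)].
Proof.
have [i [j [neq_ij Nij]]] :=
  index_in_pigeonhole sN iN (f := fun j : 'I_n.+1 => gpow x j) (fun j => cyclic_sub_gpow j).
wlog lt_ij : i j neq_ij Nij / i < j => [hyp|].
  have [lt_ij|lt_ji|/val_inj eq_ij] := ltngtP i j; last by rewrite eq_ij eqxx in neq_ij.
    exact: (hyp i j).
  by apply: (hyp j i) => //; [rewrite eq_sym | exact: subgroup_cosetC].
move: Nij; rewrite (gpowB _ (ltnW lt_ij)) => Nji.
exists (j - i); split=> //; first by rewrite subn_gt0.
exact: leq_trans (leq_subr i j) (ltn_ord j).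
Qed.

Lemma index_in_cyclic_gt0 : 0 < n.
Proof. by have [d [d_gt0 le_dn _]] := exists_gpow_mem_leq_index; apply: leq_trans le_dn. Qed.

Lemma gpow_index_mem : N (gpow x n).
Proof.
have [d [d_gt0 le_dn Nd]] := exists_gpow_mem_leq_index.
by rewrite (@anti_leq n d) ?le_dn ?(index_leq_gpow_mem d_gt0 Nd).
Qed.

Lemma gpow_memE m : N (gpow x m) <-> n %| m.
Proof.
split=> [Nm|]; last exact: gpow_mem_dvdn gpow_index_mem.
have Nmod : N (gpow x (m %% n)).
  have := gpow_coset_modn gpow_index_mem (esym (modn_mod m n)).
  by case: sN => _ NM _ /(NM _ _ Nm); rewrite gmulKVg.
rewrite /dvdn; case: (posnP (m %% n)) => [//|pos].
by have := ltn_pmod m index_in_cyclic_gt0; rewrite ltnNge (index_leq_gpow_mem pos Nmod).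
Qed.

End CyclicSubgroupIndex.

Lemma pelt_expg_eq1_dvdn (gT : finGroupType) p (z : gT) k m :
  prime p -> (p.-elt z)%g -> (z ^+ (p ^ k) != 1)%g -> (z ^+ m = 1)%g -> p ^ k.+1 %| m.
Proof.
move=> p_pr /p_natP[a oz]; rewrite -order_dvdn oz dvdn_Pexp2l ?prime_gt1 // -ltnNge.
move=> lt_ka /eqP; rewrite -order_dvdn oz; apply: dvdn_trans.
by rewrite dvdn_Pexp2l ?prime_gt1.
Qed.

Section KernelIndex.
Variables (G : abs_group) (gT : finGroupType) (f : G -> gT).
Local Notation "a ** b" := (gmul a b) (at level 40, left associativity).
Local Notation inv := (@ginv G).
Hypothesis fM : forall a b, f (a ** b) = (f a * f b)%g.

Lemma gmorph1 : f (gone G) = 1%g.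
Proof. by apply: (mulgI (f (gone G))); rewrite -fM gmul1 mulg1. Qed.

Lemma gmorphV a : f (inv a) = (f a)^-1%g.
Proof. by apply: (mulIg (f a)); rewrite -fM gmulV gmorph1 mulVg. Qed.

Lemma gmorph_gpow a m : f (gpow a m) = (f a ^+ m)%g.
Proof. by elim: m => [|m IH] /=; rewrite ?gmorph1 // fM IH expgS. Qed.

Let ker := fun y => f y = 1%g.

Lemma ker_normal : normal_in ker (fun _ => True).
Proof.
split=> //; last by move=> h y _ fy1; rewrite /ker !fM gmorphV fy1 mul1g mulVg.
split; first exact: gmorph1.
  by move=> a b fa1 fb1; rewrite /ker fM fa1 fb1 mulg1.
by move=> a fa1; rewrite /ker gmorphV fa1 invg1.
Qed.

Hypothesis f_surj : forall z : gT, exists a, f a = z.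

Lemma ker_index_card : index_in ker (fun _ => True) #|gT|.
Proof.
have [pre preK] := fin_all_exists f_surj.
exists (fun i => pre (enum_val i)); split=> // h _.
exists (enum_rank (f h)); split; first by rewrite /ker fM gmorphV preK enum_rankK mulVg.
move=> i; rewrite /ker fM gmorphV preK => /eqP; rewrite -eq_mulVg1 => /eqP <-.
by rewrite enum_valK.
Qed.

Lemma ker_normal_ppow_index (p : nat) :
  pgroup p [set: gT] -> normal_ppow_index p ker (fun _ => True).
Proof.
move=> /p_natP[k]; rewrite cardsT => card_gT; split; first exact: ker_normal.
by exists k; rewrite -card_gT; apply: ker_index_card.
Qed.

End KernelIndex.

Lemma normal_ppow_index_total (G : abs_group) p :
  normal_ppow_index p (fun _ : G => True) (fun _ => True).
Proof.
split; first by split.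
by exists 0, (fun=> gone G); split=> // h _; exists ord0; split=> // i _; rewrite ord1.
Qed.

Theorem lemma3p8 (p : nat) (G : abs_group) :
  prime p -> residually_p_finite G p ->
  forall x : G, top_p_embedded p (cyclic_sub x).
Proof.
move=> p_pr resG x N [[sN _ _] [k iN]].
have Ncyc m : p ^ k %| m -> N (gpow x m) /\ N (gpow (ginv x) m).
  by move=> /(gpow_memE sN iN) Nm; rewrite gpowV; split=> //; case: sN => _ _; apply.
case: k iN Ncyc => [|k] iN Ncyc.
  exists (fun _ => True); split; first exact: normal_ppow_index_total.
  by move=> _ _ [m [->|->]]; have [] := Ncyc m (dvd1n m).
have xk_neq1 : gpow x (p ^ k) <> gone G.
  move=> xk1; have /(gpow_memE sN iN) : N (gpow x (p ^ k)) by rewrite xk1; case: sN.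
  by rewrite dvdn_Pexp2l ?prime_gt1 // ltnn.
have [gT [f [fM f_surj pgT fxk]]] := resG _ xk_neq1.
exists (fun y => f y = 1%g); split; first exact: ker_normal_ppow_index.
move=> y fy1 [m ym].
have fxm : (f x ^+ m = 1)%g.
  case: ym fy1 => ->; rewrite ?gpowV ?(gmorphV fM) (gmorph_gpow fM) // => /eqP.
  by rewrite invg_eq1 => /eqP.
have fxk' : (f x ^+ (p ^ k) != 1)%g by apply/eqP; rewrite -(gmorph_gpow fM).
have [Nxm Nxm'] := Ncyc m (pelt_expg_eq1_dvdn p_pr (mem_p_elt pgT (in_setT _)) fxk' fxm).
by case: ym => ->.
Qed.
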